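(* Let $\alpha\in[0,1)$ and let $s\geq 2$ be an integer with $n=3s-1\geq f(\alpha)$. Then $\rho_{\alpha}\big(K_s\vee(2s-1)K_1\big)<n-3<\eta(n)$.
   Context: For a graph $G$, $A_{\alpha}(G)=\alpha D(G)+(1-\alpha)A(G)$ where $D(G)$ is the diagonal degree matrix and $A(G)$ the adjacency matrix, and $\rho_{\alpha}(G)$ is the largest eigenvalue of $A_{\alpha}(G)$. $\vee$ denotes join, $K_m$ the complete graph on $m$ vertices, $tK_1$ the edgeless graph on $t$ vertices. Define $f(\alpha)=14$ if $\alpha\in[0,\frac12]$, $f(\alpha)=17$ if $\alpha\in(\frac12,\frac23]$, $f(\alpha)=20$ if $\alpha\in(\frac23,\frac34]$, and $f(\alpha)=\frac{5}{1-\alpha}+1$ if $\alpha\in(\frac34,1)$. $\eta(n)$ is the largest root of $x^{3}-((\alpha+1)n+\alpha-4)x^{2}+(\alpha n^{2}+(\alpha^{2}-2\alpha-1)n-2\alpha+1)x-\alpha^{2}n^{2}+(5\alpha^{2}-3\alpha+2)n-10\alpha^{2}+15\alpha-8=0$. *)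

From HB Require Import structures.
From mathcomp Require Import all_boot all_order all_algebra.
From mathcomp Require Import reals.
Set Implicit Arguments. Unset Strict Implicit. Unset Printing Implicit Defensive.
Import Order.TTheory GRing.Theory Num.Theory.
Local Open Scope ring_scope.

(* A simple graph on vertex set 'I_n is given by a symmetric irreflexive rel. *)

Definition adjmx (R : realType) (n : nat) (e : rel 'I_n) : 'M[R]_n :=
  \matrix_(i, j) (if e i j then 1 else 0).

Definition degmx (R : realType) (n : nat) (e : rel 'I_n) : 'M[R]_n :=
  \matrix_(i, j) (if i == j then (#|[set k | e i k]|)%:R else 0).

Definition Aalpha (R : realType) (n : nat) (alpha : R) (e : rel 'I_n) : 'M[R]_n :=
  alpha *: degmx R e + (1 - alpha) *: adjmx R e.

Definition is_largest_eigenvalue (R : realType) (n : nat) (M : 'M[R]_n) (lam : R) : Prop :=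
  eigenvalue M lam /\ forall mu : R, eigenvalue M mu -> mu <= lam.

Definition is_largest_root (R : realType) (p : {poly R}) (x : R) : Prop :=
  root p x /\ forall y : R, root p y -> y <= x.

(* K_s \vee (n-s)K_1 on vertex set 'I_n: vertices 0..s-1 form the clique K_s,
   vertices s..n-1 are pairwise non-adjacent, and every clique vertex is
   adjacent to every other vertex. *)
Definition Ks_join_empty (n s : nat) : rel 'I_n :=
  fun i j => (i != j) && ((val i < s)%N || (val j < s)%N).

Definition f_alpha (R : realType) (alpha : R) : R :=
  if alpha <= 1/2 then 14
  else if alpha <= 2/3 then 17
  else if alpha <= 3/4 then 20
  else 5 / (1 - alpha) + 1.

Definition eta_poly (R : realType) (alpha : R) (n : nat) : {poly R} :=
  let N : R := n%:R in
  'X^3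
  - ((alpha + 1) * N + alpha - 4)%:P * 'X^2
  + (alpha * N ^+ 2 + (alpha ^+ 2 - 2 * alpha - 1) * N - 2 * alpha + 1)%:P * 'X
  + (- alpha ^+ 2 * N ^+ 2 + (5 * alpha ^+ 2 - 3 * alpha + 2) * N
     - 10 * alpha ^+ 2 + 15 * alpha - 8)%:P.

From HB Require Import structures.
From mathcomp Require Import all_boot all_order all_algebra.
From mathcomp Require Import reals polyrcf.
From mathcomp Require Import ring lra zify.
Set Implicit Arguments. Unset Strict Implicit. Unset Printing Implicit Defensive.
Import Order.TTheory GRing.Theory Num.Theory.
Local Open Scope ring_scope.

(* The clique and the independent set of K_s \/ (n-s)K_1 form an equitable
   partition for A_alpha, with 2x2 quotient matrix of characteristic polynomial
   q below.  Summing the eigen-equations over each part shows that every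
   eigenvalue exceeding alpha n - 1 and alpha s is a root of q; both of these
   values lie below the larger root of q, so rho_alpha is that root.  For
   n = 3s - 1 the hypothesis n >= f(alpha) amounts to n >= 14 and
   (1 - alpha)(n - 3) > 3, which gives q(n - 3) > 0, hence rho_alpha < n - 3.
   The cubic defining eta(n) is negative at n - 3 and positive at 3n, so its
   largest root exceeds n - 3. *)

Lemma largest_root_gt (R : realType) (p : {poly R}) (a b : R) :
  a <= b -> p.[a] < 0 -> 0 < p.[b] ->
  exists x, is_largest_root p x /\ a < x.
Proof.
move=> le_ab pa_lt0 pb_gt0.
have sign_ab : p.[a] * p.[b] < 0 by rewrite nmulr_rlt0.
have [x0 x0_in rx0] := poly_ivtoo le_ab sign_ab.
have p_neq0 : p != 0 by apply: contraTneq pa_lt0 => ->; rewrite horner0 ltxx.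
have rootsRP y : root p y -> y \in rootsR p.
  by move=> ry; rewrite -roots_on_rootsR // ry andbT.
pose m := \big[Num.max/x0]_(y <- rootsR p) y.
have rm : root p m.
  rewrite /m big_seq; elim/big_ind: _ => // [y z ry rz | y]; first by case: leP.
  by rewrite -roots_on_rootsR // => /andP[].
have le_m y : root p y -> y <= m.
  by move=> /rootsRP yR; apply: le_bigmax_seq.
exists m; split => //.
by apply: lt_le_trans (le_m _ rx0); rewrite (itvP x0_in).
Qed.

Lemma monic_quadratic_largest_root (R : rcfType) (q : R -> R) (B C z : R) :
  (forall x, q x = x ^+ 2 - B * x + C) -> q z <= 0 ->
  exists rho, [/\ q rho = 0, forall x, q x <= 0 -> x <= rho
                & forall x, z <= x -> 0 < q x -> rho < x].
Proof.
move=> qE qz_le0.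
have disc_ge0 : 0 <= B ^+ 2 - 4 * C.
  have -> : B ^+ 2 - 4 * C = (2 * z - B) ^+ 2 - 4 * q z by rewrite qE; ring.
  by rewrite subr_ge0 (le_trans _ (sqr_ge0 _)) // pmulr_rle0.
pose r := Num.sqrt (B ^+ 2 - 4 * C).
have r_ge0 : 0 <= r := sqrtr_ge0 _.
have r2 : r ^+ 2 = B ^+ 2 - 4 * C := sqr_sqrtr disc_ge0.
pose rho := (B + r) / 2.
have qF x : q x = (x - rho) * (x - rho + r).
  have -> : q x = (x - rho) * (x - rho + r) + (r ^+ 2 - (B ^+ 2 - 4 * C)) / 4.
    by rewrite qE /rho; field.
  by rewrite r2 subrr mul0r addr0.
exists rho; split; first by rewrite qF subrr mul0r.
  move=> x; rewrite qF; apply: contraTT; rewrite -!ltNge => lt_rho_x.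
  by apply: mulr_gt0; lra.
move=> x le_zx; rewrite qF; apply: contraTT; rewrite -!leNgt => le_x_rho.
have [z_ge|z_lt] := lerP 0 (z - rho + r).
  by apply: mulr_le0_ge0; lra.
have : 0 < q z by rewrite qF nmulr_lgt0 //; lra.
by rewrite ltNge qz_le0.
Qed.

(* Characteristic polynomial of the quotient matrix
   [[a N - 1 + (1 - a) S, (1 - a) (N - S)], [(1 - a) S, a S]]. *)
Definition join_quotient_char {R : comPzRingType} (a N S x : R) : R :=
  (x - a * N + 1 - (1 - a) * S) * (x - a * S) - (1 - a) ^+ 2 * S * (N - S).

Lemma join_quotient_charE (R : comPzRingType) (a N S x : R) :
  join_quotient_char a N S x =
  x ^+ 2 - (a * N - 1 + S) * x + join_quotient_char a N S 0.
Proof. by rewrite /join_quotient_char; ring. Qed.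

Lemma join_quotient_char_indep_le0 (R : realFieldType) (a N S : R) :
  0 <= S <= N -> join_quotient_char a N S (a * S) <= 0.
Proof.
move=> /andP[S_ge0 S_le_N].
rewrite /join_quotient_char subrr mulr0 sub0r oppr_le0.
by apply: mulr_ge0; [apply: mulr_ge0; first exact: sqr_ge0 | rewrite subr_ge0].
Qed.

Lemma join_quotient_char_clique_le0 (R : realFieldType) (a N S : R) :
  a < 1 -> 0 <= S -> S + 1 <= N -> join_quotient_char a N S (a * N - 1) <= 0.
Proof.
move=> a_lt1 S_ge0 SN; rewrite /join_quotient_char.
have -> : (a * N - 1 - a * N + 1 - (1 - a) * S) * (a * N - 1 - a * S)
    - (1 - a) ^+ 2 * S * (N - S) = - ((1 - a) * S * (N - S - 1)) by ring.
by rewrite oppr_le0 !mulr_ge0 //; lra.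
Qed.

Section KsJoinEmpty.
Variables (R : realType) (n s : nat).
Hypothesis s_lt_n : (s < n)%N.
Local Notation e := (@Ks_join_empty n s).
Local Notation N := (n%:R : R).
Local Notation S := (s%:R : R).

Lemma Ks_join_empty_sym : symmetric e.
Proof. by move=> i j; rewrite /Ks_join_empty eq_sym orbC. Qed.

Lemma sum_clique_const (c : R) : \sum_(i < n | (i < s)%N) c = c * S.
Proof.
by rewrite -(big_ord_widen _ (fun=> c) (ltnW s_lt_n)) sumr_const card_ord mulr_natr.
Qed.

Lemma sum_indep_const (c : R) : \sum_(i < n | ~~ (i < s)%N) c = c * (N - S).
Proof.
have total : \sum_(i < n) c = \sum_(i < n | (i < s)%N) c + \sum_(i < n | ~~ (i < s)%N) c.
  exact: bigID.
rewrite sum_clique_const sumr_const card_ord in total.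
by rewrite mulrBr mulr_natr total; ring.
Qed.

Lemma sum_nbhd_Ks_join_empty (F : 'I_n -> R) j :
  \sum_(i | e i j) F i =
  if (j < s)%N then \sum_i F i - F j else \sum_(i < n | (i < s)%N) F i.
Proof.
case: ifP => sj.
  rewrite [\sum_i F i](bigD1 j) //= addrAC subrr add0r.
  by apply: eq_bigl => i; rewrite /Ks_join_empty sj orbT andbT.
apply: eq_bigl => i; rewrite /Ks_join_empty sj orbF andb_idl //.
by apply: contraTneq => ->; rewrite sj.
Qed.

Lemma deg_Ks_join_empty j :
  #|[set k | e j k]|%:R = if (j < s)%N then N - 1 else S :> R.
Proof.
rewrite -[LHS]mul1r -mulr_natr -sumr_const.
rewrite (eq_bigl (fun k => e k j)) => [|k]; last by rewrite inE Ks_join_empty_sym.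
by rewrite sum_nbhd_Ks_join_empty sum_clique_const sumr_const card_ord !mul1r.
Qed.

Lemma row_mulmx_Aalpha_Ks_join_empty (a : R) (v : 'rV[R]_n) j :
  (v *m Aalpha a e) 0 j =
  if (j < s)%N then a * (N - 1) * v 0 j + (1 - a) * (\sum_i v 0 i - v 0 j)
  else a * S * v 0 j + (1 - a) * \sum_(i < n | (i < s)%N) v 0 i.
Proof.
have diag_adj : \sum_i v 0 i * Aalpha a e i j =
    \sum_i (if i == j then a * #|[set k | e j k]|%:R * v 0 j else 0)
    + (1 - a) * \sum_i (if e i j then v 0 i else 0).
  rewrite mulr_sumr -big_split /=; apply: eq_bigr => i _; rewrite !mxE.
  by case: eqP => [->|_]; [rewrite /Ks_join_empty eqxx | case: (e i j)] => /=; ring.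
rewrite !mxE diag_adj -!big_mkcond big_pred1_eq sum_nbhd_Ks_join_empty.
by rewrite deg_Ks_join_empty; case: ifP.
Qed.

Lemma eigenvalue_Aalpha_Ks_join_empty (a rho : R) :
  a < 1 -> (0 < s)%N -> join_quotient_char a N S rho = 0 ->
  eigenvalue (Aalpha a e) rho.
Proof.
move=> a_lt1 s_gt0 q_rho.
(* a left eigenvector of the quotient matrix for rho, lifted constantly to each part *)
pose x := rho - a * S; pose y := (1 - a) * S.
pose v : 'rV[R]_n := \row_j (if (j < s)%N then x else y).
have sum_clique_v : \sum_(i < n | (i < s)%N) v 0 i = x * S.
  by rewrite -sum_clique_const; apply: eq_bigr => i si; rewrite mxE si.
have sum_v : \sum_i v 0 i = x * S + y * (N - S).
  rewrite (bigID (fun i : 'I_n => (i < s)%N)) /= sum_clique_v -sum_indep_const.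
  by congr (_ + _); apply: eq_bigr => i si; rewrite mxE (negbTE si).
have y_gt0 : 0 < y by rewrite mulr_gt0 ?subr_gt0 ?ltr0n.
apply/eigenvalueP; exists v.
  apply/rowP => j; rewrite row_mulmx_Aalpha_Ks_join_empty sum_v sum_clique_v !mxE.
  by move: q_rho; rewrite /join_quotient_char /x /y; case: (j < s)%N; lra.
apply: contraTneq y_gt0 => /rowP /(_ (Ordinal s_lt_n)).
by rewrite !mxE ltnn => ->; rewrite ltxx.
Qed.

Lemma eigenvalue_Aalpha_Ks_join_empty_root (a mu : R) :
  a < 1 -> a * N - 1 < mu -> a * S < mu -> eigenvalue (Aalpha a e) mu ->
  join_quotient_char a N S mu = 0.
Proof.
move=> a_lt1 lt_mu_clique lt_mu_indep /eigenvalueP[v v_eig v_neq0].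
set SC := \sum_(i < n | (i < s)%N) v 0 i.
set SI := \sum_(i < n | ~~ (i < s)%N) v 0 i.
have sum_v : \sum_i v 0 i = SC + SI by rewrite (bigID (fun i : 'I_n => (i < s)%N)).
have eig_j j := congr1 (fun u : 'rV_n => u 0 j) v_eig.
have clique_eq (j : 'I_n) : (j < s)%N -> (mu - a * N + 1) * v 0 j = (1 - a) * (SC + SI).
  by move=> sj; have := eig_j j; rewrite row_mulmx_Aalpha_Ks_join_empty sj mxE sum_v; lra.
have indep_eq (j : 'I_n) : ~~ (j < s)%N -> (mu - a * S) * v 0 j = (1 - a) * SC.
  move=> /negbTE sj; have := eig_j j.
  by rewrite row_mulmx_Aalpha_Ks_join_empty sj mxE -/SC; lra.
have clique_sum : (mu - a * N + 1) * SC = (1 - a) * (SC + SI) * S.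
  by rewrite mulr_sumr -sum_clique_const; apply: eq_bigr => i /clique_eq.
have indep_sum : (mu - a * S) * SI = (1 - a) * SC * (N - S).
  by rewrite mulr_sumr -sum_indep_const; apply: eq_bigr => i /indep_eq.
have : SC * join_quotient_char a N S mu = 0.
  have -> : SC * join_quotient_char a N S mu =
      (mu - a * S) * ((mu - a * N + 1) * SC - (1 - a) * (SC + SI) * S)
      + (1 - a) * S * ((mu - a * S) * SI - (1 - a) * SC * (N - S)).
    by rewrite /join_quotient_char; ring.
  by rewrite clique_sum indep_sum !subrr !mulr0 addr0.
move/eqP; rewrite mulf_eq0 => /orP[/eqP SC0 | /eqP //].
have SI0 : SI = 0.
  by move/eqP: indep_sum; rewrite SC0 mulr0 mul0r mulf_eq0 => /orP[/eqP|/eqP]; lra.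
case/eqP: v_neq0; apply/rowP => j; rewrite mxE.
have [sj | sj] := boolP (j < s)%N.
  by move/eqP: (clique_eq j sj); rewrite SC0 SI0 addr0 mulr0 mulf_eq0 => /orP[/eqP|/eqP]; lra.
by move/eqP: (indep_eq j sj); rewrite SC0 mulr0 mulf_eq0 => /orP[/eqP|/eqP]; lra.
Qed.

Lemma Aalpha_Ks_join_empty_largest_eigenvalue (a rho : R) :
  a < 1 -> (0 < s)%N -> join_quotient_char a N S rho = 0 ->
  (forall x, join_quotient_char a N S x <= 0 -> x <= rho) ->
  is_largest_eigenvalue (Aalpha a e) rho.
Proof.
move=> a_lt1 s_gt0 q_rho rho_max.
split=> [|mu eig_mu]; first exact: eigenvalue_Aalpha_Ks_join_empty.
have S_ge0 : 0 <= S := ler0n _ _.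
have SN : S + 1 <= N by rewrite natr1 ler_nat.
have le_clique : a * N - 1 <= rho by apply/rho_max/join_quotient_char_clique_le0.
have le_indep : a * S <= rho.
  by apply/rho_max/join_quotient_char_indep_le0; rewrite S_ge0 ler_nat ltnW.
rewrite leNgt; apply/negP => rho_lt_mu.
have q_mu := eigenvalue_Aalpha_Ks_join_empty_root a_lt1
  (le_lt_trans le_clique rho_lt_mu) (le_lt_trans le_indep rho_lt_mu) eig_mu.
by move: (rho_max mu); rewrite q_mu lexx leNgt rho_lt_mu => /(_ isT).
Qed.

End KsJoinEmpty.

Lemma horner_eta_poly (R : realType) (a : R) (n : nat) (x : R) :
  (eta_poly a n).[x] = x ^+ 3 - ((a + 1) * n%:R + a - 4) * x ^+ 2
  + (a * n%:R ^+ 2 + (a ^+ 2 - 2 * a - 1) * n%:R - 2 * a + 1) * x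
  + (- a ^+ 2 * n%:R ^+ 2 + (5 * a ^+ 2 - 3 * a + 2) * n%:R
     - 10 * a ^+ 2 + 15 * a - 8).
Proof. by rewrite /eta_poly !hornerE. Qed.

Lemma eta_poly_lt0 (R : realType) (a : R) (n : nat) :
  0 <= a -> 3 < (1 - a) * (n%:R - 3) -> (eta_poly a n).[n%:R - 3] < 0.
Proof.
move=> a_ge0 gap; rewrite horner_eta_poly.
set N : R := n%:R in gap *.
have -> : (N - 3) ^+ 3 - ((a + 1) * N + a - 4) * (N - 3) ^+ 2
  + (a * N ^+ 2 + (a ^+ 2 - 2 * a - 1) * N - 2 * a + 1) * (N - 3)
  + (- a ^+ 2 * N ^+ 2 + (5 * a ^+ 2 - 3 * a + 2) * N - 10 * a ^+ 2 + 15 * a - 8)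
  = -2 - 2 * a * ((1 - a) * (N - 3) - 3 + 2 * a) by ring.
nra.
Qed.

Lemma eta_poly_gt0 (R : realType) (a : R) (n : nat) :
  0 <= a -> a < 1 -> 14 <= n%:R :> R -> 0 < (eta_poly a n).[3 * n%:R].
Proof.
move=> a_ge0 a_lt1; rewrite horner_eta_poly; set N : R := n%:R => N_ge14.
have -> : (3 * N) ^+ 3 - ((a + 1) * N + a - 4) * (3 * N) ^+ 2
  + (a * N ^+ 2 + (a ^+ 2 - 2 * a - 1) * N - 2 * a + 1) * (3 * N)
  + (- a ^+ 2 * N ^+ 2 + (5 * a ^+ 2 - 3 * a + 2) * N - 10 * a ^+ 2 + 15 * a - 8)
  = (18 - 6 * a) * N ^+ 3 + (2 * a ^+ 2 - 15 * a + 33) * N ^+ 2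
    + (5 * a ^+ 2 - 9 * a + 5) * N - 10 * a ^+ 2 + 15 * a - 8 by ring.
have N2 : 196 <= N ^+ 2 by nra.
have cubic_ge0 : 0 <= (18 - 6 * a) * N ^+ 3 by rewrite mulr_ge0 ?exprn_ge0; lra.
have linear_ge0 : 0 <= (5 * a ^+ 2 - 9 * a + 5) * N by rewrite mulr_ge0; nra.
nra.
Qed.

Lemma f_alpha_bounds (R : realType) (a N : R) :
  0 <= a -> a < 1 -> f_alpha a <= N -> 14 <= N /\ 3 < (1 - a) * (N - 3).
Proof.
move=> a_ge0 a_lt1; rewrite /f_alpha.
case: ifP => [? ? | _]; first by split; nra.
case: ifP => [? ? | _]; first by split; nra.
case: ifP => [? ? | /negbT]; first by split; nra.
rewrite -ltNge => a_gt34 N_ge.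
have div_gapK : 5 / (1 - a) * (1 - a) = 5 by rewrite divfK //; lra.
split; nra.
Qed.

Lemma join_quotient_char_gt0 (R : realFieldType) (a N S : R) :
  0 <= a -> a < 1 -> 5 <= S -> N = 3 * S - 1 -> 3 < (1 - a) * (N - 3) ->
  0 < join_quotient_char a N S (N - 3).
Proof.
move=> a_ge0 a_lt1 S_ge5 -> gap; rewrite /join_quotient_char.
have -> : (3 * S - 1 - 3 - a * (3 * S - 1) + 1 - (1 - a) * S) * (3 * S - 1 - 3 - a * S)
   - (1 - a) ^+ 2 * S * (3 * S - 1 - S)
   = (1 - a) * (4 * S ^+ 2 - 12 * S + 4) - (4 * S - 8) by ring.
have quad_gt0 : 0 < 4 * S ^+ 2 - 12 * S + 4 by nra.
nra.
Qed.

Theorem mainTheorem6 (R : realType) (alpha : R) (s n : nat) :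
  0 <= alpha -> alpha < 1 ->
  (2 <= s)%N -> n = (3 * s - 1)%N ->
  f_alpha alpha <= n%:R ->
  exists rho eta : R,
    is_largest_eigenvalue (Aalpha alpha (@Ks_join_empty n s)) rho /\
    is_largest_root (eta_poly alpha n) eta /\
    rho < n%:R - 3 /\ n%:R - 3 < eta.
Proof.
move=> a_ge0 a_lt1 s_ge2 n_def f_le.
have s_lt_n : (s < n)%N by rewrite n_def; lia.
have N_def : n%:R = 3 * s%:R - 1 :> R by rewrite n_def natrB ?natrM //; lia.
have [N_ge14 gap] := f_alpha_bounds a_ge0 a_lt1 f_le.
have S_ge5 : 5 <= s%:R :> R by lra.
have S_le_N : 0 <= (s%:R : R) <= n%:R by rewrite ler0n ler_nat ltnW.
have [rho [q_rho rho_max rho_min]] := monic_quadratic_largest_root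
  (join_quotient_charE alpha n%:R s%:R) (join_quotient_char_indep_le0 alpha S_le_N).
have le_Nm3_3N : n%:R - 3 <= 3 * n%:R :> R by lra.
have [eta [eta_root eta_gt]] := largest_root_gt le_Nm3_3N
  (eta_poly_lt0 a_ge0 gap) (eta_poly_gt0 a_ge0 a_lt1 N_ge14).
have rho_lt : rho < n%:R - 3.
  by apply: rho_min; [nra | exact: join_quotient_char_gt0].
exists rho, eta; split; last by [].
exact: (Aalpha_Ks_join_empty_largest_eigenvalue s_lt_n a_lt1 (ltnW s_ge2)).
Qed.
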